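(* Let $\alpha\in\mathbb{R}$ be fixed and let $\phi\colon\, ]0,+\infty[\,\to\mathbb{R}$ be a function such that (a) $\phi$ is $\mathbb{Q}$-homogeneous of order $\alpha$, i.e. $\phi(rx)=r^{\alpha}\phi(x)$ for all $x\in\,]0,+\infty[$ and all $r\in\mathbb{Q}\cap\,]0,+\infty[$; and (b) $\phi$ is continuous at some point of $]0,+\infty[$. Then $\phi$ is continuous at every point of $]0,+\infty[$. *)

From Stdlib Require Import Reals QArith.
Open Scope R_scope.

Definition Q_homogeneous (alpha : R) (phi : R -> R) : Prop :=
  forall (x : R) (r : Q), 0 < x -> 0 < Q2R r ->
    phi (Q2R r * x) = Rpower (Q2R r) alpha * phi x.

(* Fix a point x0 of continuity.  For y > 0 the function t |-> t^alpha * phi (y / t)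
   is continuous at y / x0 and, by Q-homogeneity, equal to phi y at every positive
   rational t; by density of the rationals it equals phi y at y / x0 as well.  Hence
   phi y = (y / x0)^alpha * phi x0 on all of ]0, +oo[, a continuous function. *)

From Stdlib Require Import Reals QArith Lra.
Open Scope R_scope.

Lemma Q2R_dense (t d : R) : 0 < d -> exists q : Q, t < Q2R q < t + d.
Proof.
  intros Hd.
  assert (Hinvd : 0 < / d) by (apply Rinv_0_lt_compat; lra).
  destruct (archimed (/ d)) as [Hup _].
  assert (Hup_pos : (0 < up (/ d))%Z) by (apply lt_IZR; lra).
  set (p := Z.to_pos (up (/ d))).
  set (n := IZR (Zpos p)).
  assert (Hn : / d < n) by (unfold n, p; rewrite Z2Pos.id; assumption).
  assert (Hdn : 1 < d * n).
  { apply (Rmult_lt_compat_l d) in Hn; [|lra]. rewrite Rinv_r in Hn; lra. }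
  (* q := up (t n) / n, an n-th fraction within 1/n < d above t. *)
  destruct (archimed (t * n)) as [Hlow Hhigh].
  exists (Qmake (up (t * n)) p).
  unfold Q2R; simpl; fold n.
  split; apply (Rmult_lt_reg_r n); try lra;
    rewrite Rmult_assoc, Rinv_l by lra; nra.
Qed.

Lemma continuity_pt_Q_const (f : R -> R) (t c : R) :
  0 < t -> continuity_pt f t ->
  (forall q : Q, 0 < Q2R q -> f (Q2R q) = c) -> f t = c.
Proof.
  intros Ht Hf Hq.
  destruct (Req_dec (f t) c) as [|Hneq]; [assumption|exfalso].
  assert (Heps : 0 < Rabs (f t - c)) by (apply Rabs_pos_lt; lra).
  destruct (Hf _ Heps) as [a [Ha Hnear]].
  destruct (Q2R_dense t a Ha) as [q [Hq1 Hq2]].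
  assert (Hclose : R_dist (f (Q2R q)) (f t) < Rabs (f t - c)).
  { apply Hnear; split; [split; [exact I | lra] |].
    simpl; unfold R_dist; rewrite Rabs_right; lra. }
  rewrite Hq, R_dist_sym in Hclose by lra.
  unfold R_dist in Hclose; lra.
Qed.

Lemma continuity_pt_Rpower (a t : R) : 0 < t -> continuity_pt (fun x => Rpower x a) t.
Proof.
  intros Ht; apply derivable_continuous_pt.
  exists (a * Rpower t (a - 1)); exact (derivable_pt_lim_power t a Ht).
Qed.

Lemma continuity_pt_comp_div (f : R -> R) (y t : R) :
  t <> 0 -> continuity_pt f (y / t) -> continuity_pt (fun s => f (y / s)) t.
Proof.
  intros Ht Hf.
  apply (continuity_pt_comp (fun s => y / s) f); [|exact Hf].
  apply continuity_pt_div; [apply continuity_pt_const; now intros ? ? | |exact Ht].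
  apply derivable_continuous_pt, derivable_pt_id.
Qed.

Lemma Q_homogeneous_power_law (alpha : R) (phi : R -> R) (x0 : R) :
  Q_homogeneous alpha phi -> 0 < x0 -> continuity_pt phi x0 ->
  forall y, 0 < y -> phi y = Rpower (y / x0) alpha * phi x0.
Proof.
  intros Hhom Hx0 Hc y Hy.
  set (g := fun t => Rpower t alpha * phi (y / t)).
  assert (Ht0 : 0 < y / x0) by (apply Rdiv_lt_0_compat; assumption).
  assert (Hg_cont : continuity_pt g (y / x0)).
  { apply continuity_pt_mult; [now apply continuity_pt_Rpower|].
    apply continuity_pt_comp_div; [lra|].
    now replace (y / (y / x0)) with x0 by (field; lra). }
  assert (Hg_Q : forall q : Q, 0 < Q2R q -> g (Q2R q) = phi y).
  { intros q Hq; unfold g.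
    rewrite <- Hhom; [| apply Rdiv_lt_0_compat; assumption | assumption].
    f_equal; field; lra. }
  rewrite <- (continuity_pt_Q_const g (y / x0) (phi y) Ht0 Hg_cont Hg_Q).
  unfold g; do 2 f_equal; field; lra.
Qed.

Lemma continuity_pt_power_law (a c x0 x : R) :
  0 < x0 -> 0 < x -> continuity_pt (fun y => Rpower (y / x0) a * c) x.
Proof.
  intros Hx0 Hx.
  apply continuity_pt_mult; [|apply continuity_pt_const; now intros ? ?].
  apply (continuity_pt_comp (fun y => y / x0) (fun z => Rpower z a)).
  - apply continuity_pt_div; [apply derivable_continuous_pt, derivable_pt_id
                             | apply continuity_pt_const; now intros ? ? | lra].
  - apply continuity_pt_Rpower, Rdiv_lt_0_compat; assumption.
Qed.

Theorem mainTheorem1 (alpha : R) (phi : R -> R) :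
  Q_homogeneous alpha phi ->
  (exists x0 : R, 0 < x0 /\ continuity_pt phi x0) ->
  forall x : R, 0 < x -> continuity_pt phi x.
Proof.
  intros Hhom [x0 [Hx0 Hc]] x Hx.
  apply (continuity_pt_locally_ext (fun y => Rpower (y / x0) alpha * phi x0) phi x x Hx).
  - intros y Hy; apply Rabs_def2 in Hy.
    symmetry; apply (Q_homogeneous_power_law alpha phi x0); auto; lra.
  - exact (continuity_pt_power_law alpha (phi x0) x0 x Hx0 Hx).
Qed.
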